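(* Fix an edge $ij\in\mathcal E$, dual variables $(\lambda,\xi)$, and let $\Gamma=\Gamma(\lambda,\xi)$. Then: (a) If $\xi'=\xi$ and $\lambda'$ agrees with $\lambda$ except $\lambda'_{ij}(x)=\lambda_{ij}(x)+\frac12\log\frac{\sum_{x'}\Gamma_{ij}(x,x')}{\Gamma_i(x)}$ for all $x\in\chi$ (so that $\Gamma(\lambda',\xi')$ is the projection of $\Gamma$ onto $\{\Gamma_{ij}\mathbb 1=\Gamma_i\}$), then $L(\lambda',\xi')-L(\lambda,\xi)=2h^2(\Gamma_{ij}\mathbb 1,\Gamma_i)$. (b) If $\lambda'=\lambda$ and $\xi'$ agrees with $\xi$ except $\xi'_{ij}=\xi_{ij}+\log\sum_{x_i,x_j}\Gamma_{ij}(x_i,x_j)$ and $\xi'_i=\xi_i+\log\sum_x\Gamma_i(x)$ (so that $\Gamma(\lambda',\xi')$ is obtained by normalizing $\Gamma_{ij}$ and $\Gamma_i$), then $L(\lambda',\xi')-L(\lambda,\xi)\ge0$. (c) If $\xi'=\xi$ and $\lambda'$ agrees with $\lambda$ except $\lambda'_{ji}(x)=\lambda_{ji}(x)+\frac12\log\frac{\sum_{x'}\Gamma_{ij}(x',x)}{\Gamma_j(x)}$ for all $x\in\chi$ (so that $\Gamma(\lambda',\xi')$ is the projection onto $\{\Gamma_{ij}^\top\mathbb 1=\Gamma_j\}$), then $L(\lambda',\xi')-L(\lambda,\xi)=2h^2(\Gamma_{ij}^\top\mathbb 1,\Gamma_j)$. (d) If $\lambda'=\lambda$ and $\xi'$ agrees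 with $\xi$ except $\xi'_{ij}=\xi_{ij}+\log\sum_{x_i,x_j}\Gamma_{ij}(x_i,x_j)$ and $\xi'_j=\xi_j+\log\sum_x\Gamma_j(x)$, then $L(\lambda',\xi')-L(\lambda,\xi)\ge0$.
   Context: Let $G=(\mathcal V,\mathcal E)$ be a graph with $\mathcal V=\{1,\dots,n\}$, edges written as ordered pairs $ij$, $N(i)$ the set of neighbours of $i$, $\chi=\{0,\dots,d-1\}$, $\eta>0$, and $C$ a cost vector with components $C_i\in\mathbb R^d$ ($i\in\mathcal V$), $C_{ij}\in\mathbb R^{d\times d}$ ($ij\in\mathcal E$). Dual variables $(\lambda,\xi)$ consist of, for each edge $ij\in\mathcal E$, vectors $\lambda_{ij}\in\mathbb R^d$ (associated with vertex $i$) and $\lambda_{ji}\in\mathbb R^d$ (associated with vertex $j$) and a scalar $\xi_{ij}$, and for each vertex a scalar $\xi_i$. The associated marginal vector $\Gamma(\lambda,\xi)$ is $\Gamma_{ij}(x_i,x_j)=\exp(-\eta C_{ij}(x_i,x_j)-\lambda_{ij}(x_i)-\lambda_{ji}(x_j)-\xi_{ij})$ and $\Gamma_i(x)=\exp(-\eta C_i(x)-\xi_i+\sum_{j\in N(i)}\lambda_{ij}(x))$. The Lyapunov function is $L(\lambda,\xi)=-\sum_{ij\in\mathcal E}\sum_{x_i,x_j}\Gamma_{ij}(x_i,x_j)-\sum_{i\in\mathcal V}\sum_x\Gamma_i(x)-\sum_{ij\in\mathcal E}\xi_{ij}-\sum_{i\in\mathcal V}\xi_i+\sum_{ij\in\mathcal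 E}\sum_{x_i,x_j}e^{-\eta C_{ij}(x_i,x_j)}+\sum_{i}\sum_{x}e^{-\eta C_i(x)}$, with $\Gamma=\Gamma(\lambda,\xi)$. For nonnegative vectors $p,q$, $h(p,q)=\frac1{\sqrt2}\|\sqrt p-\sqrt q\|_2$ (entrywise square roots). *)

From HB Require Import structures.
From mathcomp Require Import all_boot all_order all_algebra.
From mathcomp Require Import all_classical all_reals.
From mathcomp Require Import all_analysis.
Set Implicit Arguments. Unset Strict Implicit. Unset Printing Implicit Defensive.
Import Order.TTheory GRing.Theory Num.Theory.
Local Open Scope ring_scope.

Section Defs.
Variables (R : realType) (n d : nat).

Definition simple_edges (E : {set 'I_n * 'I_n}) : Prop :=
  (forall e, e \in E -> e.1 != e.2) /\
  (forall i j, (i, j) \in E -> (j, i) \notin E).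

Definition nbrs (E : {set 'I_n * 'I_n}) (i : 'I_n) : {set 'I_n} :=
  [set j | ((i, j) \in E) || ((j, i) \in E)].

(* Dual variables: lam i j : vector at vertex i of the edge joining i and j
   (meaningful when ij or ji is an edge), xiE i j : scalar of edge ij,
   xiV i : scalar of vertex i.  State space chi = 'I_d. *)

Definition GammaE (eta : R) (CE : 'I_n -> 'I_n -> 'I_d -> 'I_d -> R)
  (lam : 'I_n -> 'I_n -> 'I_d -> R) (xiE : 'I_n -> 'I_n -> R)
  (i j : 'I_n) (a b : 'I_d) : R :=
  expR (- eta * CE i j a b - lam i j a - lam j i b - xiE i j).

Definition GammaV (E : {set 'I_n * 'I_n}) (eta : R) (CV : 'I_n -> 'I_d -> R)
  (lam : 'I_n -> 'I_n -> 'I_d -> R) (xiV : 'I_n -> R)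
  (i : 'I_n) (a : 'I_d) : R :=
  expR (- eta * CV i a - xiV i + \sum_(j in nbrs E i) lam i j a).

Definition Lyap (E : {set 'I_n * 'I_n}) (eta : R)
  (CV : 'I_n -> 'I_d -> R) (CE : 'I_n -> 'I_n -> 'I_d -> 'I_d -> R)
  (lam : 'I_n -> 'I_n -> 'I_d -> R) (xiE : 'I_n -> 'I_n -> R)
  (xiV : 'I_n -> R) : R :=
  - (\sum_(e in E) \sum_(a < d) \sum_(b < d) GammaE eta CE lam xiE e.1 e.2 a b)
  - (\sum_(i < n) \sum_(a < d) GammaV E eta CV lam xiV i a)
  - (\sum_(e in E) xiE e.1 e.2)
  - (\sum_(i < n) xiV i)
  + (\sum_(e in E) \sum_(a < d) \sum_(b < d) expR (- eta * CE e.1 e.2 a b))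
  + (\sum_(i < n) \sum_(a < d) expR (- eta * CV i a)).

Definition hellinger (p q : 'I_d -> R) : R :=
  (Num.sqrt 2)^-1 * Num.sqrt (\sum_(x < d) (Num.sqrt (p x) - Num.sqrt (q x)) ^+ 2).

Definition rowsum (G : 'I_d -> 'I_d -> R) (a : 'I_d) : R := \sum_(b < d) G a b.
Definition colsum (G : 'I_d -> 'I_d -> R) (b : 'I_d) : R := \sum_(a < d) G a b.
Definition totsum (G : 'I_d -> 'I_d -> R) : R := \sum_(a < d) \sum_(b < d) G a b.

End Defs.

From HB Require Import structures.
From mathcomp Require Import all_boot all_order all_algebra.
From mathcomp Require Import all_classical all_reals.
From mathcomp Require Import all_analysis.
From mathcomp Require Import ring lra.
Import Order.TTheory GRing.Theory Num.Theory.
Local Open Scope ring_scope.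

(* The dual variables enter Gamma only through exponential factors: shifting
   lam_ij(x) by c(x) multiplies row x of Gamma_ij by e^(-c(x)) and Gamma_i(x)
   by e^(c(x)), while raising a xi by s multiplies its block, of mass m, by
   e^(-s) and lowers the linear part of L by s.  So L' - L is a sum of local
   losses of mass.  For c = log(r/g)/2 both rescaled masses equal sqrt(r g),
   and the loss r + g - 2 sqrt(r g) is (sqrt r - sqrt g)^2; for s = log m the
   gain is m - 1 - log m >= 0.  Part (c) is part (a) for the reversed edge. *)

Lemma sumrB_eq_except {V : zmodType} {T : finType} {P : pred T} (e0 : T)
    {f g : T -> V} :
  P e0 -> (forall e, P e -> e != e0 -> f e = g e) ->
  \sum_(e | P e) f e - \sum_(e | P e) g e = f e0 - g e0.
Proof.
move=> Pe0 fg; rewrite (bigD1 e0) //= [X in _ - X](bigD1 e0) //=.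
rewrite [X in _ - (_ + X)](eq_bigr f) => [|e /andP[Pe ne]]; last by rewrite fg.
by rewrite opprD addrACA subrr addr0.
Qed.

Lemma expR_half_ln (R : realType) (y : R) :
  0 < y -> expR (2^-1 * ln y) = Num.sqrt y.
Proof. by move=> y0; rewrite -powR12_sqrt ?ltW // /powR gt_eqF. Qed.

Lemma normalization_gain_ge0 (R : realType) (m : R) :
  0 <= m -> 0 <= m - m * expR (- ln m) - ln m.
Proof.
rewrite le0r => /orP[/eqP->|m0]; first by rewrite ln0 // mul0r !subr0.
rewrite expRN lnK ?posrE // divff ?gt_eqF //.
have := expR_ge1Dx (ln m); rewrite lnK ?posrE //; lra.
Qed.

Lemma balanced_rescaling_gain (R : realType) (r g : R) : 0 < r -> 0 < g ->
  r - r * expR (- (2^-1 * ln (r / g))) + (g - g * expR (2^-1 * ln (r / g)))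
  = (Num.sqrt r - Num.sqrt g) ^+ 2.
Proof.
move=> r0 g0.
rewrite expRN expR_half_ln ?divr_gt0 // sqrtrM ?ltW // sqrtrV ?ltW //.
have r2 := sqr_sqrtr (ltW r0); have g2 := sqr_sqrtr (ltW g0).
have s0 : 0 < Num.sqrt r by rewrite sqrtr_gt0.
have t0 : 0 < Num.sqrt g by rewrite sqrtr_gt0.
move: r2 g2 s0 t0; move: (Num.sqrt r) (Num.sqrt g) => s t <- <- s0 t0.
by field; rewrite !gt_eqF.
Qed.

Lemma hellinger_sqrE (R : realType) d (p q : 'I_d -> R) :
  2 * hellinger p q ^+ 2 = \sum_(x < d) (Num.sqrt (p x) - Num.sqrt (q x)) ^+ 2.
Proof.
rewrite /hellinger exprMn sqr_sqrtr; last by apply: sumr_ge0 => x _; exact: sqr_ge0.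
by rewrite exprVn sqr_sqrtr // mulrA divff ?mul1r.
Qed.

Lemma rowsum_gt0 (R : realType) d (G : 'I_d -> 'I_d -> R) (a : 'I_d) :
  (forall a b, 0 < G a b) -> 0 < rowsum G a.
Proof.
move=> G0; apply: (lt_le_trans (G0 a a)).
by rewrite /rowsum (bigD1 a) //= lerDl; apply: sumr_ge0 => b _; exact/ltW.
Qed.

Section Lyapunov.
Variables (R : realType) (n d : nat) (E : {set 'I_n * 'I_n}) (eta : R).
Variables (CV : 'I_n -> 'I_d -> R) (CE : 'I_n -> 'I_n -> 'I_d -> 'I_d -> R).

Local Notation GE := (GammaE eta CE).
Local Notation GV := (GammaV E eta CV).
Local Notation L := (Lyap E eta CV CE).

Lemma Lyap_sub lam xiE xiV lam' xiE' xiV' :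
  L lam' xiE' xiV' - L lam xiE xiV =
  (\sum_(e in E) \sum_(a < d) \sum_(b < d) GE lam xiE e.1 e.2 a b
   - \sum_(e in E) \sum_(a < d) \sum_(b < d) GE lam' xiE' e.1 e.2 a b)
  + (\sum_(k < n) \sum_(a < d) GV lam xiV k a
     - \sum_(k < n) \sum_(a < d) GV lam' xiV' k a)
  + (\sum_(e in E) xiE e.1 e.2 - \sum_(e in E) xiE' e.1 e.2)
  + (\sum_(k < n) xiV k - \sum_(k < n) xiV' k).
Proof. rewrite /Lyap; lra. Qed.

Lemma GammaV_shift lam lam' xiV (i j : 'I_n) (a : 'I_d) (c : R) :
  j \in nbrs E i -> (forall l, l != j -> lam' i l a = lam i l a) ->
  lam' i j a = lam i j a + c ->
  GV lam' xiV i a = GV lam xiV i a * expR c.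
Proof.
move=> jn lam'E lam'ij.
rewrite /GammaV (bigD1 j) //= [in RHS](bigD1 j) //= lam'ij -expRD.
rewrite (eq_bigr (fun l => lam i l a)) => [|l /andP[_ nl]]; last exact: lam'E.
by congr expR; lra.
Qed.

Variables (i j : 'I_n).
Hypothesis Eij : (i, j) \in E.

Section Projection.
Hypothesis simpleE : simple_edges E.

Lemma Lyap_lam_shift {lam xiE xiV lam'} {c : 'I_d -> R} :
  (forall k l x, (k, l) != (i, j) -> lam' k l x = lam k l x) ->
  (forall x, lam' i j x = lam i j x + c x) ->
  L lam' xiE xiV - L lam xiE xiV =
  \sum_(x < d) (rowsum (GE lam xiE i j) x - rowsum (GE lam xiE i j) x * expR (- c x)
                + (GV lam xiV i x - GV lam xiV i x * expR (c x))).
Proof.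
move=> lam'E lam'ij.
have [ij nEji] : i != j /\ (j, i) \notin E.
  by case: simpleE => loopless asym; split; [exact: (loopless _ Eij) | exact: asym].
have jiNij : (j, i) != (i, j) by rewrite xpair_eqE eq_sym (negbTE ij).
rewrite Lyap_sub (sumrB_eq_except (i, j)) // => [|[k l] Ekl ne]; last first.
  apply: eq_bigr => a _; apply: eq_bigr => b _; rewrite /GammaE /= !lam'E //.
  by apply: contraNneq nEji => -[<- <-].
rewrite (sumrB_eq_except i) // => [|k _ ki]; last first.
  apply: eq_bigr => a _; rewrite /GammaV; congr expR; congr (_ + _).
  by apply: eq_bigr => l _; rewrite lam'E // xpair_eqE negb_and ki.
rewrite !subrr !addr0 -!sumrB -big_split /=; apply: eq_bigr => a _.
have -> : \sum_(b < d) GE lam' xiE i j a b = rowsum (GE lam xiE i j) a * expR (- c a).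
  rewrite /rowsum big_distrl; apply: eq_bigr => b _ /=.
  rewrite /GammaE lam'ij (lam'E j i _ jiNij) -expRD.
  by congr expR; lra.
rewrite (@GammaV_shift lam lam' xiV i j a (c a)) ?inE ?Eij // => l lj.
by apply: lam'E; rewrite xpair_eqE eqxx.
Qed.

Lemma Lyap_row_projection {lam xiE xiV lam'} :
  (forall k l x, (k, l) != (i, j) -> lam' k l x = lam k l x) ->
  (forall x, lam' i j x =
     lam i j x + 2^-1 * ln (rowsum (GE lam xiE i j) x / GV lam xiV i x)) ->
  L lam' xiE xiV - L lam xiE xiV =
  2 * hellinger (rowsum (GE lam xiE i j)) (GV lam xiV i) ^+ 2.
Proof.
move=> lam'E lam'ij; rewrite (Lyap_lam_shift lam'E lam'ij) hellinger_sqrE.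
apply: eq_bigr => x _; apply: balanced_rescaling_gain; last exact: expR_gt0.
by apply: rowsum_gt0 => a b; exact: expR_gt0.
Qed.

End Projection.

Lemma Lyap_xi_shift {lam xiE xiV xiE' xiV'} {v : 'I_n} {s t : R} :
  (forall k l, (k, l) != (i, j) -> xiE' k l = xiE k l) -> xiE' i j = xiE i j + s ->
  (forall k, k != v -> xiV' k = xiV k) -> xiV' v = xiV v + t ->
  L lam xiE' xiV' - L lam xiE xiV =
  (totsum (GE lam xiE i j) - totsum (GE lam xiE i j) * expR (- s) - s)
  + (\sum_(x < d) GV lam xiV v x - (\sum_(x < d) GV lam xiV v x) * expR (- t) - t).
Proof.
move=> xiE'E xiE'ij xiV'E xiV'v.
rewrite Lyap_sub (sumrB_eq_except (i, j)) // => [|[k l] _ ne]; last first.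
  by apply: eq_bigr => a _; apply: eq_bigr => b _; rewrite /GammaE /= xiE'E.
rewrite (sumrB_eq_except v) // => [|k _ ne]; last first.
  by apply: eq_bigr => a _; rewrite /GammaV xiV'E.
rewrite (sumrB_eq_except (i, j)) // => [|[k l] _ ne]; last by rewrite /= xiE'E.
rewrite (sumrB_eq_except v) // => [|k _ ne]; last by rewrite xiV'E.
have -> : \sum_(a < d) \sum_(b < d) GE lam xiE' i j a b
          = totsum (GE lam xiE i j) * expR (- s).
  rewrite /totsum big_distrl; apply: eq_bigr => a _ /=.
  rewrite big_distrl; apply: eq_bigr => b _ /=.
  by rewrite /GammaE xiE'ij -expRD; congr expR; lra.
have -> : \sum_(a < d) GV lam xiV' v a = (\sum_(x < d) GV lam xiV v x) * expR (- t).
  rewrite big_distrl; apply: eq_bigr => a _ /=.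
  by rewrite /GammaV xiV'v -expRD; congr expR; lra.
rewrite /= xiE'ij xiV'v /totsum; lra.
Qed.

Lemma Lyap_normalization {lam xiE xiV xiE' xiV'} {v : 'I_n} :
  (forall k l, (k, l) != (i, j) -> xiE' k l = xiE k l) ->
  xiE' i j = xiE i j + ln (totsum (GE lam xiE i j)) ->
  (forall k, k != v -> xiV' k = xiV k) ->
  xiV' v = xiV v + ln (\sum_(x < d) GV lam xiV v x) ->
  0 <= L lam xiE' xiV' - L lam xiE xiV.
Proof.
move=> xiE'E xiE'ij xiV'E xiV'v; rewrite (Lyap_xi_shift xiE'E xiE'ij xiV'E xiV'v).
apply: addr_ge0; apply: normalization_gain_ge0.
  by apply: sumr_ge0 => a _; apply: sumr_ge0 => b _; exact/ltW/expR_gt0.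
by apply: sumr_ge0 => a _; exact/ltW/expR_gt0.
Qed.

End Lyapunov.

Definition rev_edges {n} (E : {set 'I_n * 'I_n}) : {set 'I_n * 'I_n} :=
  [set e | swap_pair e \in E].

Section Reversal.
Variables (R : realType) (n d : nat) (E : {set 'I_n * 'I_n}) (eta : R).
Variables (CV : 'I_n -> 'I_d -> R) (CE : 'I_n -> 'I_n -> 'I_d -> 'I_d -> R).

Local Notation CE_rev := (fun k l a b => CE l k b a).

Lemma simple_edges_rev : simple_edges E -> simple_edges (rev_edges E).
Proof.
case=> loopless asym; split=> [[k l]|k l]; rewrite !inE /=.
  by move/loopless; rewrite eq_sym.
exact: asym.
Qed.

Lemma nbrs_rev : nbrs (rev_edges E) = nbrs E.
Proof. by apply/funext => k; apply/setP => l; rewrite !inE orbC. Qed.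

Lemma sum_rev_edges (F : 'I_n * 'I_n -> R) :
  \sum_(e in rev_edges E) F e = \sum_(e in E) F (swap_pair e).
Proof.
rewrite [RHS](reindex_inj (can_inj swap_pairK)).
by apply: eq_big => [e|e _]; rewrite ?inE ?swap_pairK.
Qed.

Lemma GammaE_rev lam xiE k l a b :
  GammaE eta CE_rev lam (fun k l => xiE l k) k l a b = GammaE eta CE lam xiE l k b a.
Proof. by rewrite /GammaE; congr expR; lra. Qed.

Lemma Lyap_rev lam xiE xiV :
  Lyap (rev_edges E) eta CV CE_rev lam (fun k l => xiE l k) xiV =
  Lyap E eta CV CE lam xiE xiV.
Proof.
have sum_rev2 (F : 'I_n -> 'I_n -> 'I_d -> 'I_d -> R) :
    \sum_(e in rev_edges E) \sum_(a < d) \sum_(b < d) F e.1 e.2 a b =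
    \sum_(e in E) \sum_(a < d) \sum_(b < d) F e.2 e.1 b a.
  by rewrite sum_rev_edges; apply: eq_bigr => e _; rewrite exchange_big.
have GE_rev : \sum_(e in rev_edges E) \sum_(a < d) \sum_(b < d)
      GammaE eta CE_rev lam (fun k l => xiE l k) e.1 e.2 a b =
    \sum_(e in E) \sum_(a < d) \sum_(b < d) GammaE eta CE lam xiE e.1 e.2 a b.
  rewrite sum_rev2; apply: eq_bigr => e _; apply: eq_bigr => a _.
  by apply: eq_bigr => b _; rewrite GammaE_rev.
rewrite /Lyap GE_rev (sum_rev2 (fun k l a b => expR (- eta * CE l k b a))).
by rewrite /GammaV nbrs_rev sum_rev_edges.
Qed.

Lemma Lyap_col_projection {i j : 'I_n} {lam xiE xiV lam'} :
  simple_edges E -> (i, j) \in E ->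
  (forall k l x, (k, l) != (j, i) -> lam' k l x = lam k l x) ->
  (forall x, lam' j i x = lam j i x +
     2^-1 * ln (colsum (GammaE eta CE lam xiE i j) x / GammaV E eta CV lam xiV j x)) ->
  Lyap E eta CV CE lam' xiE xiV - Lyap E eta CV CE lam xiE xiV =
  2 * hellinger (colsum (GammaE eta CE lam xiE i j)) (GammaV E eta CV lam xiV j) ^+ 2.
Proof.
move=> simpleE Eij lam'E lam'ji.
have rowE : rowsum (GammaE eta CE_rev lam (fun k l => xiE l k) j i)
            = colsum (GammaE eta CE lam xiE i j).
  by apply/funext => x; apply: eq_bigr => b _; rewrite GammaE_rev.
have GVE : GammaV (rev_edges E) eta CV = GammaV E eta CV by rewrite /GammaV nbrs_rev.
rewrite -(Lyap_rev lam') -(Lyap_rev lam) -rowE -GVE.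
apply: Lyap_row_projection.
- by rewrite inE /=.
- exact: simple_edges_rev.
- exact: lam'E.
- by move=> x; rewrite rowE GVE.
Qed.

End Reversal.

Theorem lemma1 (R : realType) (n d : nat) (E : {set 'I_n * 'I_n}) (eta : R)
  (CV : 'I_n -> 'I_d -> R) (CE : 'I_n -> 'I_n -> 'I_d -> 'I_d -> R)
  (i j : 'I_n)
  (lam : 'I_n -> 'I_n -> 'I_d -> R) (xiE : 'I_n -> 'I_n -> R) (xiV : 'I_n -> R) :
  simple_edges E -> 0 < eta -> (i, j) \in E ->
  let GE := GammaE eta CE lam xiE in
  let GV := GammaV E eta CV lam xiV in
  let L0 := Lyap E eta CV CE lam xiE xiV in
  (* (a) *)
  (forall lam' : 'I_n -> 'I_n -> 'I_d -> R,
     (forall k l x, (k, l) != (i, j) -> lam' k l x = lam k l x) ->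
     (forall x, lam' i j x =
        lam i j x + 2^-1 * ln (rowsum (GE i j) x / GV i x)) ->
     Lyap E eta CV CE lam' xiE xiV - L0 =
       2 * hellinger (rowsum (GE i j)) (GV i) ^+ 2) /\
  (* (b) *)
  (forall (xiE' : 'I_n -> 'I_n -> R) (xiV' : 'I_n -> R),
     (forall k l, (k, l) != (i, j) -> xiE' k l = xiE k l) ->
     xiE' i j = xiE i j + ln (totsum (GE i j)) ->
     (forall k, k != i -> xiV' k = xiV k) ->
     xiV' i = xiV i + ln (\sum_(x < d) GV i x) ->
     0 <= Lyap E eta CV CE lam xiE' xiV' - L0) /\
  (* (c) *)
  (forall lam' : 'I_n -> 'I_n -> 'I_d -> R,
     (forall k l x, (k, l) != (j, i) -> lam' k l x = lam k l x) ->
     (forall x, lam' j i x =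
        lam j i x + 2^-1 * ln (colsum (GE i j) x / GV j x)) ->
     Lyap E eta CV CE lam' xiE xiV - L0 =
       2 * hellinger (colsum (GE i j)) (GV j) ^+ 2) /\
  (* (d) *)
  (forall (xiE' : 'I_n -> 'I_n -> R) (xiV' : 'I_n -> R),
     (forall k l, (k, l) != (i, j) -> xiE' k l = xiE k l) ->
     xiE' i j = xiE i j + ln (totsum (GE i j)) ->
     (forall k, k != j -> xiV' k = xiV k) ->
     xiV' j = xiV j + ln (\sum_(x < d) GV j x) ->
     0 <= Lyap E eta CV CE lam xiE' xiV' - L0).
Proof.
move=> simpleE _ Eij GE GV L0.
split; [|split; [|split]].
- by move=> lam'; exact: Lyap_row_projection.
- by move=> xiE' xiV'; exact: Lyap_normalization.
- by move=> lam'; exact: Lyap_col_projection.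
- by move=> xiE' xiV'; exact: Lyap_normalization.
Qed.
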